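(* Let $P\in\Delta_{\mathcal{T},\mathcal{X},\mathcal{Y}}$ and let $Q_1,Q_2\in\Delta_P$ both be maximizers of $H_Q(T\mid X,Y)$ over $Q\in\Delta_P$. Then $Q_1(T\mid X,Y)=Q_2(T\mid X,Y)$.
   Context: $T,X,Y$ are random variables with finite state spaces $\mathcal{T},\mathcal{X},\mathcal{Y}$; $\Delta_{\mathcal{T},\mathcal{X},\mathcal{Y}}$ is the set of all joint distributions on $\mathcal{T}\times\mathcal{X}\times\mathcal{Y}$. For $P\in\Delta_{\mathcal{T},\mathcal{X},\mathcal{Y}}$, $\Delta_P=\{Q\in\Delta_{\mathcal{T},\mathcal{X},\mathcal{Y}}: Q(X=x,T=t)=P(X=x,T=t),\ Q(Y=y,T=t)=P(Y=y,T=t)\ \forall x,y,t\}$. $H_Q(T\mid X,Y)$ is the conditional entropy under $Q$; equality of conditionals is understood almost everywhere. *)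

From mathcomp Require Import all_boot.
From Stdlib Require Import Reals.
Set Implicit Arguments. Unset Strict Implicit. Unset Printing Implicit Defensive.
Open Scope R_scope.

Definition rsum (I : finType) (f : I -> R) : R := \big[Rplus/0]_(i : I) f i.

Definition is_dist (T X Y : finType) (Q : T -> X -> Y -> R) : Prop :=
  (forall t x y, 0 <= Q t x y) /\
  rsum (fun t => rsum (fun x => rsum (fun y => Q t x y))) = 1.

Definition margXT (T X Y : finType) (Q : T -> X -> Y -> R) (x : X) (t : T) : R :=
  rsum (fun y => Q t x y).
Definition margYT (T X Y : finType) (Q : T -> X -> Y -> R) (y : Y) (t : T) : R :=
  rsum (fun x => Q t x y).
Definition margXY (T X Y : finType) (Q : T -> X -> Y -> R) (x : X) (y : Y) : R :=
  rsum (fun t => Q t x y).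

Definition in_DeltaP (T X Y : finType) (P Q : T -> X -> Y -> R) : Prop :=
  is_dist Q /\
  (forall x t, margXT Q x t = margXT P x t) /\
  (forall y t, margYT Q y t = margYT P y t).

Definition condEntropy (T X Y : finType) (Q : T -> X -> Y -> R) : R :=
  rsum (fun t => rsum (fun x => rsum (fun y =>
    if Rlt_dec 0 (Q t x y)
    then - (Q t x y * ln (Q t x y / margXY Q x y))
    else 0))).

Definition is_maximizer (T X Y : finType) (P Q : T -> X -> Y -> R) : Prop :=
  in_DeltaP P Q /\
  forall Q', in_DeltaP P Q' -> condEntropy Q' <= condEntropy Q.

(* The conditional entropy H_Q(T | X, Y) is concave and [Delta_P] is convex, so the
   midpoint [Qm] of two maximizers is again feasible and cannot beat them:
   2 H(Qm) <= H(Q1) + H(Q2).  On the other hand the Jensen gap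
   2 H(Qm) - H(Q1) - H(Q2) is a sum of pointwise nonnegative Bregman terms
   a ln (a/A) - a ln (m/M) - a + A m/M, each of which vanishes only when a/A = m/M.
   Hence both conditionals Q1(t | x, y) and Q2(t | x, y) equal Qm(t | x, y). *)
From HB Require Import structures.
From mathcomp Require Import all_boot.
From Stdlib Require Import Reals Lra.
Set Implicit Arguments. Unset Strict Implicit.
Open Scope R_scope.

Lemma Rplus_assoc_law : associative Rplus. Proof. by move=> *; rewrite Rplus_assoc. Qed.
Lemma Rplus_comm_law : commutative Rplus. Proof. by move=> *; rewrite Rplus_comm. Qed.
Lemma Rplus_left_id : left_id 0 Rplus. Proof. by move=> *; rewrite Rplus_0_l. Qed.
HB.instance Definition _ := Monoid.isComLaw.Build R 0 Rplus Rplus_assoc_law Rplus_comm_law Rplus_left_id.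

Section FiniteSums.
Variable I : finType.
Implicit Types f g : I -> R.

Lemma rsum_ext f g : (forall i, f i = g i) -> rsum f = rsum g.
Proof. by move=> efg; apply: eq_bigr. Qed.

Lemma rsumD f g : rsum (fun i => f i + g i) = rsum f + rsum g.
Proof. exact: big_split. Qed.

Lemma rsumZ c f : rsum (fun i => c * f i) = c * rsum f.
Proof.
apply: (big_ind2 (fun u v => u = c * v)) => [|u1 u2 v1 v2 -> ->|//]; lra.
Qed.

Lemma rsum_mid f g : rsum (fun i => (f i + g i) / 2) = (rsum f + rsum g) / 2.
Proof.
rewrite -rsumD /Rdiv (Rmult_comm _ (/ 2)) -rsumZ.
by apply: rsum_ext => i; rewrite Rmult_comm.
Qed.

Lemma rsum_ge0 f : (forall i, 0 <= f i) -> 0 <= rsum f.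
Proof. by move=> f_ge0; apply: (big_ind (fun u => 0 <= u)) => // *; lra. Qed.

Lemma rsum_ge_term f i : (forall j, 0 <= f j) -> f i <= rsum f.
Proof.
move=> f_ge0; rewrite /rsum (bigD1 i) //=.
have : 0 <= \big[Rplus/0]_(j | j != i) f j.
  by apply: (big_ind (fun u => 0 <= u)) => // *; lra.
lra.
Qed.

Lemma rsum_le0_eq0 f : (forall i, 0 <= f i) -> rsum f <= 0 -> forall i, f i = 0.
Proof.
move=> f_ge0 sum_le0 i; have := rsum_ge_term i f_ge0; have := f_ge0 i; lra.
Qed.

End FiniteSums.

Section TripleSums.
Variables T X Y : finType.
Implicit Types f g : T -> X -> Y -> R.

Definition rsum3 f : R := rsum (fun t => rsum (fun x => rsum (fun y => f t x y))).

Lemma rsum3_ext f g : (forall t x y, f t x y = g t x y) -> rsum3 f = rsum3 g.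
Proof. by move=> efg; do 3![apply: rsum_ext => ?]; apply: efg. Qed.

Lemma rsum3D f g : rsum3 (fun t x y => f t x y + g t x y) = rsum3 f + rsum3 g.
Proof. by rewrite -rsumD; do 2![apply: rsum_ext => ?; rewrite -rsumD]. Qed.

Lemma rsum3Z c f : rsum3 (fun t x y => c * f t x y) = c * rsum3 f.
Proof. by rewrite -rsumZ; do 2![apply: rsum_ext => ?; rewrite -rsumZ]. Qed.

Lemma rsum3_le0_eq0 f :
  (forall t x y, 0 <= f t x y) -> rsum3 f <= 0 -> forall t x y, f t x y = 0.
Proof.
move=> f_ge0 sum_le0 t x y.
have ge0_x t' x' : 0 <= rsum (fun y' => f t' x' y') by apply: rsum_ge0.
have ge0_t t' : 0 <= rsum (fun x' => rsum (fun y' => f t' x' y')).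
  by apply: rsum_ge0.
have sum_t0 := rsum_le0_eq0 ge0_t sum_le0 t.
have sum_tx0 := rsum_le0_eq0 (ge0_x t) (Req_le _ _ sum_t0) x.
exact: rsum_le0_eq0 (f_ge0 t x) (Req_le _ _ sum_tx0) y.
Qed.

End TripleSums.

Lemma ln_le_sub1 z : 0 < z -> ln z <= z - 1.
Proof. by move=> z_gt0; have := exp_ineq1_le (ln z); rewrite exp_ln //; lra. Qed.

Lemma ln_eq_sub1 z : 0 < z -> ln z = z - 1 -> z = 1.
Proof.
move=> z_gt0 lnz; have [lnz0|lnz_neq0] := Req_dec (ln z) 0.
  by rewrite -(exp_ln z) // lnz0 exp_0.
by have := exp_ineq1 (ln z) lnz_neq0; rewrite exp_ln //; lra.
Qed.

Lemma Rdiv_ge0 x y : 0 <= x -> 0 <= y -> 0 <= x / y.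
Proof.
have [->|y_neq0] := Req_dec y 0; first by rewrite Rdiv_0_r; lra.
by move=> *; apply: Rle_mult_inv_pos; lra.
Qed.

Lemma ln_div x y : 0 < x -> 0 < y -> ln (x / y) = ln x - ln y.
Proof.
by move=> x_gt0 y_gt0; rewrite ln_mult ?ln_Rinv //; apply: Rinv_0_lt_compat.
Qed.

(* The Bregman divergence of [x ln x] between the proportions a/A and m/M,
   scaled by A. *)
Definition bregman a A m M : R := a * ln (a / A) - a * ln (m / M) - a + A * m / M.

Lemma bregmanE a A m M : 0 < a -> 0 < A -> 0 < m -> 0 < M ->
  let z := (m / M) / (a / A) in bregman a A m M = a * (z - 1 - ln z).
Proof.
move=> a_gt0 A_gt0 m_gt0 M_gt0 z.
have aA_gt0 : 0 < a / A by apply: Rdiv_lt_0_compat.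
have mM_gt0 : 0 < m / M by apply: Rdiv_lt_0_compat.
rewrite /bregman /z [ln (m / M / _)]ln_div //.
field; lra.
Qed.

Lemma bregman_ge0 a A m M :
  0 <= a -> 0 <= A -> 0 <= m -> 0 <= M -> (0 < a -> 0 < A /\ 0 < m /\ 0 < M) ->
  0 <= bregman a A m M.
Proof.
move=> a_ge0 A_ge0 m_ge0 M_ge0 pos.
have [a0|a_neq0] := Req_dec a 0.
  rewrite /bregman a0 !Rmult_0_l; have := Rdiv_ge0 (Rmult_le_pos _ _ A_ge0 m_ge0) M_ge0.
  lra.
have [A_gt0 [m_gt0 M_gt0]] : 0 < A /\ 0 < m /\ 0 < M by apply: pos; lra.
have z_gt0 : 0 < (m / M) / (a / A) by do 2?apply: Rdiv_lt_0_compat => //; lra.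
rewrite bregmanE //; last lra.
apply: Rmult_le_pos => //; have := ln_le_sub1 z_gt0; lra.
Qed.

Lemma bregman_eq0 a A m M : 0 <= a -> 0 < A -> 0 <= m -> 0 < M ->
  (0 < a -> 0 < m) -> bregman a A m M = 0 -> a / A = m / M.
Proof.
move=> a_ge0 A_gt0 m_ge0 M_gt0 m_pos.
have [a0|a_neq0] := Req_dec a 0.
  rewrite /bregman a0 !Rmult_0_l Rdiv_0_l => eq0.
  have AM_gt0 : 0 < A / M by apply: Rdiv_lt_0_compat.
  have -> : m = 0 by apply: (Rmult_eq_reg_l (A / M)); lra.
  by rewrite Rdiv_0_l.
have m_gt0 : 0 < m by apply: m_pos; lra.
have z_gt0 : 0 < (m / M) / (a / A) by do 2?apply: Rdiv_lt_0_compat => //; lra.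
rewrite bregmanE //; last lra.
move=> /Rmult_integral [|gap0]; first lra.
have z1 : (m / M) / (a / A) = 1 by apply: ln_eq_sub1 => //; lra.
have aA_gt0 : 0 < a / A by apply: Rdiv_lt_0_compat; lra.
have -> : m / M = (m / M) / (a / A) * (a / A) by field; split; lra.
by rewrite z1 Rmult_1_l.
Qed.

Lemma bregman_midpoint a A b B : 0 <= a <= A -> 0 <= b <= B ->
  let m := (a + b) / 2 in let M := (A + B) / 2 in
  a * ln (a / A) + b * ln (b / B) - 2 * (m * ln (m / M)) =
  bregman a A m M + bregman b B m M.
Proof.
move=> a_bnd b_bnd m M; rewrite /bregman /m /M.
have [AB0|AB_neq0] := Req_dec (A + B) 0; last by field.
have [[a0 A0] [b0 B0]] : (a = 0 /\ A = 0) /\ (b = 0 /\ B = 0) by lra.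
by rewrite a0 A0 b0 B0 Rplus_0_l !Rdiv_0_l !Rmult_0_l Rdiv_0_l; lra.
Qed.

Lemma bregman_midpoint_ge0 a A b B : 0 <= a <= A -> 0 <= b <= B ->
  0 <= bregman a A ((a + b) / 2) ((A + B) / 2).
Proof. by move=> a_bnd b_bnd; apply: bregman_ge0; lra. Qed.

Lemma bregman_midpoint_eq0 a A b B : 0 <= a <= A -> 0 < A -> 0 <= b <= B ->
  bregman a A ((a + b) / 2) ((A + B) / 2) = 0 -> a / A = ((a + b) / 2) / ((A + B) / 2).
Proof. by move=> a_bnd A_gt0 b_bnd; apply: bregman_eq0; lra. Qed.

Definition cond_xlnx (T X Y : finType) (Q : T -> X -> Y -> R) t x y : R :=
  Q t x y * ln (Q t x y / margXY Q x y).

Lemma condEntropyE (T X Y : finType) (Q : T -> X -> Y -> R) :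
  (forall t x y, 0 <= Q t x y) -> condEntropy Q = - rsum3 (cond_xlnx Q).
Proof.
move=> Q_ge0; rewrite -(Rmult_1_l (rsum3 _)) Ropp_mult_distr_l -rsum3Z.
apply: rsum3_ext => t x y; rewrite /cond_xlnx.
destruct (Rlt_dec 0 (Q t x y)) as [Q_gt0|Q_le0] => /=; first ring.
have -> : Q t x y = 0 by have := Q_ge0 t x y; lra.
ring.
Qed.

Lemma le_margXY (T X Y : finType) (Q : T -> X -> Y -> R) :
  (forall t x y, 0 <= Q t x y) -> forall t x y, 0 <= Q t x y <= margXY Q x y.
Proof. by move=> Q_ge0 t x y; split; last apply: rsum_ge_term => t'. Qed.

Section Midpoint.
Variables (T X Y : finType) (Q1 Q2 : T -> X -> Y -> R).

Definition midpoint t x y : R := (Q1 t x y + Q2 t x y) / 2.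

Lemma rsum3_midpoint : rsum3 midpoint = (rsum3 Q1 + rsum3 Q2) / 2.
Proof. by rewrite -rsum_mid; do 2![apply: rsum_ext => ?; rewrite -rsum_mid]. Qed.

Lemma margXT_midpoint x t : margXT midpoint x t = (margXT Q1 x t + margXT Q2 x t) / 2.
Proof. exact: rsum_mid. Qed.

Lemma margYT_midpoint y t : margYT midpoint y t = (margYT Q1 y t + margYT Q2 y t) / 2.
Proof. exact: rsum_mid. Qed.

Lemma margXY_midpoint x y : margXY midpoint x y = (margXY Q1 x y + margXY Q2 x y) / 2.
Proof. exact: rsum_mid. Qed.

Lemma is_dist_midpoint : is_dist Q1 -> is_dist Q2 -> is_dist midpoint.
Proof.
move=> [Q1_ge0 sum_Q1] [Q2_ge0 sum_Q2]; split.
  by move=> t x y; have := Q1_ge0 t x y; have := Q2_ge0 t x y; rewrite /midpoint; lra.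
by have := rsum3_midpoint; rewrite /rsum3 sum_Q1 sum_Q2 => ->; lra.
Qed.

Lemma in_DeltaP_midpoint P : in_DeltaP P Q1 -> in_DeltaP P Q2 -> in_DeltaP P midpoint.
Proof.
move=> [dist_Q1 [XT_Q1 YT_Q1]] [dist_Q2 [XT_Q2 YT_Q2]]; split; first exact: is_dist_midpoint.
split=> [x t|y t].
  by rewrite margXT_midpoint XT_Q1 XT_Q2; lra.
by rewrite margYT_midpoint YT_Q1 YT_Q2; lra.
Qed.

Definition midpoint_gap t x y : R :=
  bregman (Q1 t x y) (margXY Q1 x y) (midpoint t x y) (margXY midpoint x y) +
  bregman (Q2 t x y) (margXY Q2 x y) (midpoint t x y) (margXY midpoint x y).

Hypotheses (Q1_ge0 : forall t x y, 0 <= Q1 t x y) (Q2_ge0 : forall t x y, 0 <= Q2 t x y).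

Lemma condEntropy_midpoint_gap :
  2 * condEntropy midpoint - condEntropy Q1 - condEntropy Q2 = rsum3 midpoint_gap.
Proof.
have mid_ge0 t x y : 0 <= midpoint t x y.
  by have := Q1_ge0 t x y; have := Q2_ge0 t x y; rewrite /midpoint; lra.
rewrite !condEntropyE //.
transitivity (rsum3 (fun t x y =>
  cond_xlnx Q1 t x y + cond_xlnx Q2 t x y + -2 * cond_xlnx midpoint t x y)).
  by rewrite !rsum3D rsum3Z; ring.
apply: rsum3_ext => t x y.
have := bregman_midpoint (le_margXY Q1_ge0 t x y) (le_margXY Q2_ge0 t x y).
by rewrite /midpoint_gap /cond_xlnx margXY_midpoint /midpoint; lra.
Qed.

Lemma midpoint_gap_ge0 t x y : 0 <= midpoint_gap t x y.
Proof.
have bnd1 := le_margXY Q1_ge0 t x y; have bnd2 := le_margXY Q2_ge0 t x y.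
rewrite /midpoint_gap margXY_midpoint /midpoint.
have := bregman_midpoint_ge0 bnd1 bnd2; have := bregman_midpoint_ge0 bnd2 bnd1.
rewrite [Q2 t x y + _]Rplus_comm [margXY Q2 x y + _]Rplus_comm; lra.
Qed.

Lemma midpoint_gap_eq0 t x y : midpoint_gap t x y = 0 ->
  0 < margXY Q1 x y -> 0 < margXY Q2 x y ->
  Q1 t x y / margXY Q1 x y = Q2 t x y / margXY Q2 x y.
Proof.
move=> gap0 A_gt0 B_gt0.
have bnd1 := le_margXY Q1_ge0 t x y; have bnd2 := le_margXY Q2_ge0 t x y.
move: gap0; rewrite /midpoint_gap margXY_midpoint /midpoint => gap0.
have := bregman_midpoint_ge0 bnd1 bnd2; have := bregman_midpoint_ge0 bnd2 bnd1.
have := bregman_midpoint_eq0 bnd2 B_gt0 bnd1.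
rewrite (Rplus_comm (Q2 t x y)) (Rplus_comm (margXY Q2 x y)) => eq2 ge0_2 ge0_1.
by rewrite (bregman_midpoint_eq0 bnd1 A_gt0 bnd2) ?eq2 //; lra.
Qed.

End Midpoint.

Theorem mainTheorem7 (T X Y : finType) (P Q1 Q2 : T -> X -> Y -> R) :
  is_dist P ->
  is_maximizer P Q1 -> is_maximizer P Q2 ->
  forall x y, 0 < margXY Q1 x y -> 0 < margXY Q2 x y ->
  forall t, Q1 t x y / margXY Q1 x y = Q2 t x y / margXY Q2 x y.
Proof.
move=> _ [D_Q1 max_Q1] [D_Q2 max_Q2] x y A_gt0 B_gt0 t.
have [[Q1_ge0 _] _] := D_Q1; have [[Q2_ge0 _] _] := D_Q2.
have D_mid := in_DeltaP_midpoint D_Q1 D_Q2.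
have gap_le0 : rsum3 (midpoint_gap Q1 Q2) <= 0.
  rewrite -condEntropy_midpoint_gap //.
  by have := max_Q1 _ D_mid; have := max_Q2 _ D_mid; lra.
apply: midpoint_gap_eq0 => //.
exact: rsum3_le0_eq0 (midpoint_gap_ge0 Q1_ge0 Q2_ge0) gap_le0 t x y.
Qed.
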